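(* For every real $s$, the measures $\Phi_s(P\|Q)$, $\Omega_s(P\|Q)$ and $\Omega_s(Q\|P)$ are nonnegative and jointly convex in the pair $(P,Q)\in\Gamma_n\times\Gamma_n$; and for every $s\in[0,4]$, the measures $\zeta_s(P\|Q)$ and $\zeta_s(Q\|P)$ are nonnegative and jointly convex in $(P,Q)\in\Gamma_n\times\Gamma_n$.
   Context: $\Gamma_n=\{P=(p_1,\dots,p_n): p_i>0,\ \sum_i p_i=1\}$, $n\ge2$. For $P,Q\in\Gamma_n$ and $s\in\mathbb{R}$: $\Phi_s(P\|Q)=[s(s-1)]^{-1}\big[\sum_i p_i^s q_i^{1-s}-1\big]$ for $s\ne0,1$; $\Phi_0(P\|Q)=\sum_i q_i\ln(q_i/p_i)$; $\Phi_1(P\|Q)=\sum_i p_i\ln(p_i/q_i)$. $\Omega_s(P\|Q)=[s(s-1)]^{-1}\big[\sum_i p_i\big(\frac{p_i+q_i}{2p_i}\big)^s-1\big]$ for $s\ne0,1$; $\Omega_0(P\|Q)=\sum_i p_i\ln\frac{2p_i}{p_i+q_i}$; $\Omega_1(P\|Q)=\sum_i\frac{p_i+q_i}{2}\ln\frac{p_i+q_i}{2p_i}$. $\zeta_s(P\|Q)=(s-1)^{-1}\sum_i(p_i-q_i)\big(\frac{p_i+q_i}{2q_i}\big)^{s-1}$ for $s\ne1$; $\zeta_1(P\|Q)=\sum_i(p_i-q_i)\ln\frac{p_i+q_i}{2q_i}$. $\Omega_s(Q\|P)$ and $\zeta_s(Q\|P)$ are obtained by interchanging the roles of $p_i$ and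 $q_i$. *)

From mathcomp Require Import all_boot all_order all_algebra.
From mathcomp Require Import reals exp.
Set Implicit Arguments. Unset Strict Implicit. Unset Printing Implicit Defensive.
Import Order.TTheory GRing.Theory Num.Theory.
Local Open Scope ring_scope.

Section Defs.
Variable R : realType.
Variable n : nat.

Definition Gamma (p : 'I_n -> R) : Prop :=
  (forall i, 0 < p i) /\ \sum_(i < n) p i = 1.

Definition Phi (s : R) (p q : 'I_n -> R) : R :=
  if s == 0 then \sum_(i < n) q i * ln (q i / p i)
  else if s == 1 then \sum_(i < n) p i * ln (p i / q i)
  else (s * (s - 1))^-1 *
       (\sum_(i < n) (p i `^ s) * (q i `^ (1 - s)) - 1).

Definition Omega (s : R) (p q : 'I_n -> R) : R :=
  if s == 0 then \sum_(i < n) p i * ln (2 * p i / (p i + q i))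
  else if s == 1 then
    \sum_(i < n) (p i + q i) / 2 * ln ((p i + q i) / (2 * p i))
  else (s * (s - 1))^-1 *
       (\sum_(i < n) p i * (((p i + q i) / (2 * p i)) `^ s) - 1).

Definition zeta (s : R) (p q : 'I_n -> R) : R :=
  if s == 1 then \sum_(i < n) (p i - q i) * ln ((p i + q i) / (2 * q i))
  else (s - 1)^-1 *
       \sum_(i < n) (p i - q i) * (((p i + q i) / (2 * q i)) `^ (s - 1)).

Definition mix (t : R) (p1 p2 : 'I_n -> R) : 'I_n -> R :=
  fun i => t * p1 i + (1 - t) * p2 i.

Definition nonneg_on_Gamma (F : ('I_n -> R) -> ('I_n -> R) -> R) : Prop :=
  forall p q, Gamma p -> Gamma q -> 0 <= F p q.

Definition jointly_convex (F : ('I_n -> R) -> ('I_n -> R) -> R) : Prop :=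
  forall p1 q1 p2 q2 (t : R), Gamma p1 -> Gamma q1 -> Gamma p2 -> Gamma q2 ->
    0 <= t <= 1 ->
    F (mix t p1 p2) (mix t q1 q2) <= t * F p1 q1 + (1 - t) * F p2 q2.

End Defs.

Arguments Gamma {R} n p.
Arguments Phi {R n} s p q.
Arguments Omega {R n} s p q.
Arguments zeta {R n} s p q.
Arguments mix {R n} t p1 p2.
Arguments nonneg_on_Gamma {R} n F.
Arguments jointly_convex {R} n F.

(* Each measure is a sum [fdiv g x y = \sum_i y_i g (x_i / y_i)] in which [(x, y)]
   depends affinely on [(P, Q)], [\sum_i x_i = \sum_i y_i], and [g] is convex with
   [g 1 = 0] on a half-line containing every ratio [x_i / y_i]:
   - Phi_s : [(x, y) = (P, Q)] and [g u = (u ^ s - 1) / (s (s - 1))];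
   - Omega_s : [(x, y) = ((P + Q) / 2, P)] with the same [g];
   - zeta_s : [(x, y) = ((P + Q) / 2, Q)] and [g v = 2 (v ^ s - v ^ (s - 1)) / (s - 1)],
     convex on [v > 1/2] when [0 <= s <= 4];
   with the logarithmic limits of [g] at [s = 0, 1].  Convexity of [g] makes each
   perspective [y g (x / y)] jointly convex, and a supporting line [c (u - 1)] of [g]
   at [1] gives [fdiv g x y >= c \sum_i (x_i - y_i) = 0].  The [Q || P] measures are the
   same functions with their arguments swapped. *)

From mathcomp Require Import all_boot all_order all_algebra.
From mathcomp Require Import reals exp.
From mathcomp Require Import ring lra.
From mathcomp Require Import functions normedtype derive realfun.
Import Order.TTheory GRing.Theory Num.Theory numFieldNormedType.Exports.
Local Open Scope ring_scope.
Set Implicit Arguments. Unset Strict Implicit. Unset Printing Implicit Defensive.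

Section SupportLines.
Variable R : realType.

Definition has_support_lines (a : R) (g : R -> R) :=
  exists dg : R -> R, forall b u, a < b -> a < u -> g b + dg b * (u - b) <= g u.

Lemma conv_gt (a x y t : R) : a < x -> a < y -> 0 <= t <= 1 ->
  a < t * x + (1 - t) * y.
Proof.
move=> ax ay /andP[t0 t1]; have [->|t_gt0] := eqVneq t 0.
  by rewrite mul0r add0r subr0 mul1r.
have : 0 < t by rewrite lt_neqAle eq_sym t_gt0.
nra.
Qed.

Variables (a : R) (g : R -> R).
Hypothesis g_lines : has_support_lines a g.

Lemma support_lines_convex x y t : a < x -> a < y -> 0 <= t <= 1 ->
  g (t * x + (1 - t) * y) <= t * g x + (1 - t) * g y.
Proof.
move=> ax ay t01; have [dg g_le] := g_lines; have /andP[t0 t1] := t01.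
set z := t * x + (1 - t) * y; have az : a < z by apply: conv_gt.
have -> : g z = t * (g z + dg z * (x - z)) + (1 - t) * (g z + dg z * (y - z)).
  by rewrite /z; ring.
by apply: lerD; apply: ler_wpM2l; rewrite ?subr_ge0 // g_le.
Qed.

Lemma perspective_convex x1 y1 x2 y2 t : 0 < y1 -> 0 < y2 ->
  a < x1 / y1 -> a < x2 / y2 -> 0 <= t <= 1 ->
  (t * y1 + (1 - t) * y2) * g ((t * x1 + (1 - t) * x2) / (t * y1 + (1 - t) * y2))
    <= t * (y1 * g (x1 / y1)) + (1 - t) * (y2 * g (x2 / y2)).
Proof.
move=> y1_gt0 y2_gt0 a1 a2 t01; set y := t * y1 + _; have /andP[t0 t1] := t01.
have y_gt0 : 0 < y by apply: conv_gt.
pose l := t * y1 / y.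
have l01 : 0 <= l <= 1.
  rewrite /l divr_ge0 ?mulr_ge0 ?(ltW y_gt0) ?(ltW y1_gt0) //=.
  by rewrite ler_pdivrMr // mul1r /y lerDl mulr_ge0 ?subr_ge0 ?(ltW y2_gt0).
have -> : (t * x1 + (1 - t) * x2) / y = l * (x1 / y1) + (1 - l) * (x2 / y2).
  by rewrite /l /y; field; rewrite !gt_eqF.
have -> : t * (y1 * g (x1 / y1)) + (1 - t) * (y2 * g (x2 / y2)) =
          y * (l * g (x1 / y1) + (1 - l) * g (x2 / y2)).
  by rewrite /l /y; field; rewrite gt_eqF.
by rewrite ler_wpM2l ?(ltW y_gt0) // support_lines_convex.
Qed.

End SupportLines.

Section Tangent.
Variable R : realType.

Lemma derive_ge0_le (f df : R -> R) (a x y : R) :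
  (forall z, a < z -> is_derive z 1 f (df z)) -> a < x -> x <= y ->
  (forall z, x < z -> z < y -> 0 <= df z) -> f x <= f y.
Proof.
move=> f_df ax xy df_ge0.
have f_derivable z : x <= z -> derivable f z 1.
  by move=> xz; have [] := f_df z (lt_le_trans ax xz).
apply: (@ger0_derive1_ndecr R f x y) => //.
- by move=> z; rewrite in_itv /= => /andP[/ltW/f_derivable].
- move=> z; rewrite in_itv /= => /andP[xz zy].
  by rewrite derive1E; have [_ ->] := f_df z (lt_trans ax xz); apply: df_ge0.
- apply: derivable_within_continuous => z; rewrite in_itv /= => /andP[xz _].
  exact: f_derivable.
Qed.

Variables (f df ddf : R -> R) (a : R).
Hypothesis f_df : forall z, a < z -> is_derive z 1 f (df z).
Hypothesis df_ddf : forall z, a < z -> is_derive z 1 df (ddf z).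
Hypothesis ddf_ge0 : forall z, a < z -> 0 <= ddf z.

Lemma tangent_le b u : a < b -> a < u -> f b + df b * (u - b) <= f u.
Proof.
move=> ab au; pose h v := f v - df b * v.
have h_df z : a < z -> is_derive z 1 h (df z - df b).
  move=> az; apply: is_derive_eq; first exact: is_deriveB (f_df az) _.
  by rewrite /= [_%:A]mulr1.
have df_le x y : a < x -> x <= y -> df x <= df y.
  move=> ax xy; apply: (derive_ge0_le df_ddf ax xy) => z xz _.
  exact/ddf_ge0/(lt_trans ax xz).
rewrite -subr_ge0 (_ : _ - _ = h u - h b); last by rewrite /h; ring.
have [bu|ub] := leP b u.
  rewrite subr_ge0; apply: (derive_ge0_le h_df ab bu) => z bz _.
  by rewrite subr_ge0 df_le // ltW.
rewrite subr_ge0 -lerN2.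
have Nh_df z : a < z -> is_derive z 1 (- h) (- (df z - df b)) by move/h_df/is_deriveN.
apply: (derive_ge0_le Nh_df au (ltW ub)) => z uz zb.
by rewrite oppr_ge0 subr_le0 df_le // ?ltW // (lt_trans au uz).
Qed.

Lemma support_lines_of_derive2 : has_support_lines a f.
Proof. by exists df => b u; apply: tangent_le. Qed.

End Tangent.

Section PowR.
Variable R : realType.

Lemma mul_powR_div (x y s : R) : 0 < x -> 0 < y ->
  y * (x / y) `^ s = x `^ s * y `^ (1 - s).
Proof.
move=> x0 y0; rewrite powRM ?(ltW x0) ?invr_ge0 ?(ltW y0) //.
rewrite -powR_inv1 ?(ltW y0) // -powRrM mulN1r mulrCA; congr (_ * _).
rewrite -{1}(powRr1 (ltW y0)) -powRD //.
by apply/implyP => _; rewrite gt_eqF.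
Qed.

Lemma powR_sub1 (w s : R) : 0 < w -> w `^ s = w * w `^ (s - 1).
Proof.
move=> w0; rewrite -{2}(powRr1 (ltW w0)) -powRD ?subrKC //.
by apply/implyP => _; rewrite gt_eqF.
Qed.

End PowR.

Section Generators.
Variable R : realType.

Definition phi_gen (s : R) : R -> R :=
  if s == 0 then fun u => - ln u
  else if s == 1 then fun u => u * ln u
  else fun u => (s * (s - 1))^-1 * (u `^ s - 1).

Definition zeta_gen (s : R) : R -> R :=
  if s == 1 then fun v => 2 * ((v - 1) * ln v)
  else fun v => 2 / (s - 1) * (v `^ s - v `^ (s - 1)).

Lemma phi_gen1 s : phi_gen s 1 = 0.
Proof.
by rewrite /phi_gen; case: (s == 0); case: (s == 1) => /=;
  rewrite ?ln1 ?powR1 ?subrr ?mulr0 ?oppr0.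
Qed.

Lemma zeta_gen1 s : zeta_gen s 1 = 0.
Proof. by rewrite /zeta_gen; case: (s == 1) => /=; rewrite ?ln1 ?powR1 ?subrr !mulr0. Qed.

Lemma phi_gen_support_lines (s : R) : has_support_lines 0 (phi_gen s).
Proof.
rewrite /phi_gen; have [_|s0] := eqVneq s 0.
  apply: (@support_lines_of_derive2 _ _ (fun u => - u^-1) (fun u => (u ^+ 2)^-1)).
  - move=> z z0; apply: is_derive_eq; first exact/is_deriveN/is_derive1_ln.
    by [].
  - move=> z z0; apply: is_derive_eq.
      by apply/is_deriveN/is_deriveV; rewrite gt_eqF.
    by rewrite [_%:A]mulr1 opprK.
  - by move=> z _; rewrite invr_ge0 sqr_ge0.
have [_|s1] := eqVneq s 1.
  apply: (@support_lines_of_derive2 _ _ (fun u => ln u + 1) (fun u => u^-1)).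
  - move=> z z0; apply: is_derive_eq; first exact/is_deriveM/is_derive1_ln.
    by rewrite [_%:A]mulr1 /= -[_ *: _]/(z * z^-1) mulfV ?gt_eqF // addrC.
  - move=> z z0; apply: is_derive_eq; first exact/is_deriveD/is_derive1_ln.
    by rewrite /= addr0.
  - by move=> z z0; rewrite invr_ge0 ltW.
set k := (s * (s - 1))^-1.
apply: (@support_lines_of_derive2 _ _ (fun u => k * (s * u `^ (s - 1)))
                                      (fun u => k * (s * ((s - 1) * u `^ (s - 1 - 1))))).
- move=> z z0; apply: is_derive_eq.
    by apply/is_deriveZ/is_deriveB; exact: is_derive1_powR.
  by rewrite /= subr0.
- by move=> z z0; apply/is_deriveZ/is_deriveZ; exact: is_derive1_powR.
- move=> z _.
  rewrite (mulrA s) mulrA /k mulVf ?mul1r ?powR_ge0 //.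
  by rewrite mulf_neq0 // subr_eq0.
Qed.

(* The second derivative of [zeta_gen s] is [2 v ^ (s - 3) (s v - s + 2)], which is
   nonnegative for [v > 1/2] exactly when [s <= 4]. *)
Lemma zeta_gen_support_lines (s : R) : 0 <= s <= 4 ->
  has_support_lines (1 / 2) (zeta_gen s).
Proof.
move=> /andP[s0 s4]; have pos (z : R) : 1 / 2 < z -> 0 < z.
  by apply: lt_trans; rewrite divr_gt0.
rewrite /zeta_gen; have [_|s1] := eqVneq s 1.
  apply: (@support_lines_of_derive2 _ _ (fun v => 2 * (ln v + 1 - v^-1))
                                        (fun v => 2 * (v^-1 + (v ^+ 2)^-1))).
  - move=> z /pos z0; apply: is_derive_eq.
      by apply/is_deriveZ/is_deriveM; exact: is_derive1_ln.
    change (2 * ((z - 1) * z^-1 + ln z * (1 - 0)) = 2 * (ln z + 1 - z^-1)).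
    by field; rewrite gt_eqF.
  - move=> z /pos z0; apply: is_derive_eq.
      apply/is_deriveZ/is_deriveB; first exact/is_deriveD/is_derive1_ln.
      by apply: is_deriveV; rewrite gt_eqF.
    by rewrite [_%:A]mulr1 addr0 opprK.
  - by move=> z /pos z0; rewrite mulr_ge0 // addr_ge0 // invr_ge0 ?sqr_ge0 ?ltW.
set k := 2 / (s - 1).
apply: (@support_lines_of_derive2 _ _
  (fun v => k * (s * v `^ (s - 1) - (s - 1) * v `^ (s - 1 - 1)))
  (fun v => k * (s * ((s - 1) * v `^ (s - 1 - 1)) -
                 (s - 1) * ((s - 1 - 1) * v `^ (s - 1 - 1 - 1))))).
- move=> z /pos z0; apply: is_derive_eq.
    by apply/is_deriveZ/is_deriveB; exact: is_derive1_powR.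
  by [].
- move=> z /pos z0.
  exact: (is_deriveZ k (is_deriveB (is_deriveZ s (is_derive1_powR (s - 1) z0))
            (is_deriveZ (s - 1) (is_derive1_powR (s - 1 - 1) z0)))).
- move=> z z_gt; have z0 := pos z z_gt.
  set w := z `^ (s - 1 - 1 - 1).
  have -> : z `^ (s - 1 - 1) = w * z.
    rewrite /w -{3}(powRr1 (ltW z0)) -powRD; first by congr (_ `^ _); ring.
    by apply/implyP => _; rewrite gt_eqF.
  have -> : k * (s * ((s - 1) * (w * z)) - (s - 1) * ((s - 1 - 1) * w)) =
            2 * w * (s * z - s + 2).
    by rewrite /k; field; rewrite subr_eq0.
  rewrite !mulr_ge0 ?powR_ge0 //.
  have : 0 <= s * (z - 1 / 2) by rewrite mulr_ge0 // subr_ge0 ltW.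
  lra.
Qed.

End Generators.

Section PerspectiveSum.
Variables (R : realType) (n : nat) (a : R) (g : R -> R).
Hypothesis g_lines : has_support_lines a g.
Implicit Types x y : 'I_n -> R.

Definition fdiv x y := \sum_i y i * g (x i / y i).

Lemma fdiv_ge0 x y : a < 1 -> g 1 = 0 ->
  (forall i, 0 < y i) -> (forall i, a < x i / y i) ->
  \sum_i x i = \sum_i y i -> 0 <= fdiv x y.
Proof.
move=> a1 g1 y_gt0 xy_gt sum_xy; have [dg g_le] := g_lines.
apply: (@le_trans _ _ (\sum_i dg 1 * (x i - y i))).
  by rewrite -mulr_sumr sumrB sum_xy subrr mulr0.
apply: ler_sum => i _.
have -> : dg 1 * (x i - y i) = y i * (g 1 + dg 1 * (x i / y i - 1)).
  by rewrite g1 add0r; field; rewrite gt_eqF.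
by rewrite ler_wpM2l ?(ltW (y_gt0 i)) ?g_le.
Qed.

Lemma fdiv_mix_le x1 y1 x2 y2 t :
  (forall i, 0 < y1 i) -> (forall i, a < x1 i / y1 i) ->
  (forall i, 0 < y2 i) -> (forall i, a < x2 i / y2 i) -> 0 <= t <= 1 ->
  fdiv (mix t x1 x2) (mix t y1 y2) <= t * fdiv x1 y1 + (1 - t) * fdiv x2 y2.
Proof.
move=> y1_gt0 xy1_gt y2_gt0 xy2_gt t01.
rewrite /fdiv !mulr_sumr -big_split /=; apply: ler_sum => i _.
exact: perspective_convex g_lines _ _ _ _ _ (y1_gt0 i) (y2_gt0 i) (xy1_gt i) (xy2_gt i) t01.
Qed.

End PerspectiveSum.

Section Measures.
Variables (R : realType) (n : nat).
Implicit Types (p q : 'I_n -> R) (F : ('I_n -> R) -> ('I_n -> R) -> R).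

Lemma Gamma_mix p1 p2 t : Gamma n p1 -> Gamma n p2 -> 0 <= t <= 1 ->
  Gamma n (mix t p1 p2).
Proof.
move=> [p1_gt0 sum_p1] [p2_gt0 sum_p2] t01; split=> [i|].
  exact: (conv_gt (p1_gt0 i) (p2_gt0 i) t01).
by rewrite /mix big_split /= -!mulr_sumr sum_p1 sum_p2 !mulr1 subrKC.
Qed.

Lemma nonneg_on_Gamma_swap F :
  nonneg_on_Gamma n F -> nonneg_on_Gamma n (fun p q => F q p).
Proof. by move=> F_ge0 p q gp gq; apply: F_ge0. Qed.

Lemma jointly_convex_swap F :
  jointly_convex n F -> jointly_convex n (fun p q => F q p).
Proof. by move=> F_cvx p1 q1 p2 q2 t g1 g2 g3 g4; apply: F_cvx. Qed.

Lemma div_mul2 (u v : R) : u / (2 * v) = u / 2 / v.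
Proof. by rewrite invfM mulrA. Qed.

Definition mid p q i := (p i + q i) / 2.

Lemma mid_mix p1 q1 p2 q2 t :
  mid (mix t p1 p2) (mix t q1 q2) =1 mix t (mid p1 q1) (mid p2 q2).
Proof. by move=> i; rewrite /mid /mix; ring. Qed.

Lemma sum_mid p q : Gamma n p -> Gamma n q -> \sum_i mid p q i = 1.
Proof.
by move=> [_ sum_p] [_ sum_q]; rewrite /mid -mulr_suml big_split /= sum_p sum_q; lra.
Qed.

Lemma half_lt_mid_div p q i : Gamma n p -> Gamma n q -> 1 / 2 < mid p q i / q i.
Proof.
move=> [p_gt0 _] [q_gt0 _]; rewrite /mid ltr_pdivlMr //.
by have := p_gt0 i; lra.
Qed.

Section FdivRepresentation.
Variables (g : R -> R) (a : R) (X Y : ('I_n -> R) -> ('I_n -> R) -> 'I_n -> R).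
Hypotheses (g_lines : has_support_lines a g) (a_lt1 : a < 1) (g1 : g 1 = 0).
Hypothesis X_mix :
  forall p1 q1 p2 q2 t, X (mix t p1 p2) (mix t q1 q2) =1 mix t (X p1 q1) (X p2 q2).
Hypothesis Y_mix :
  forall p1 q1 p2 q2 t, Y (mix t p1 p2) (mix t q1 q2) =1 mix t (Y p1 q1) (Y p2 q2).
Hypothesis XY_dom : forall p q, Gamma n p -> Gamma n q ->
  [/\ forall i, 0 < Y p q i, forall i, a < X p q i / Y p q i &
      \sum_i X p q i = \sum_i Y p q i].

Lemma fdiv_nonneg_convex F :
  (forall p q, Gamma n p -> Gamma n q -> F p q = fdiv g (X p q) (Y p q)) ->
  nonneg_on_Gamma n F /\ jointly_convex n F.
Proof.
move=> F_eq; split=> [p q gp gq|p1 q1 p2 q2 t gp1 gq1 gp2 gq2 t01].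
  by have [] := XY_dom gp gq; rewrite F_eq //; apply: fdiv_ge0.
have [Y1_gt0 XY1_gt _] := XY_dom gp1 gq1; have [Y2_gt0 XY2_gt _] := XY_dom gp2 gq2.
have gp := Gamma_mix gp1 gp2 t01; have gq := Gamma_mix gq1 gq2 t01.
rewrite !F_eq // {1}/fdiv.
under eq_bigr => i _ do rewrite X_mix Y_mix.
exact: (fdiv_mix_le g_lines Y1_gt0 XY1_gt Y2_gt0 XY2_gt t01).
Qed.

End FdivRepresentation.

Lemma Phi_fdiv s p q : Gamma n p -> Gamma n q -> Phi s p q = fdiv (phi_gen s) p q.
Proof.
move=> [p_gt0 _] [q_gt0 sum_q]; rewrite /Phi /phi_gen /fdiv.
have [_|s0] := eqVneq s 0.
  apply: eq_bigr => i _; rewrite -invf_div lnV ?mulrN // posrE divr_gt0 //.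
have [_|s1] := eqVneq s 1.
  by apply: eq_bigr => i _; rewrite mulrA [q i * _]mulrC divfK // gt_eqF.
rewrite -[X in _ * (_ - X)]sum_q -sumrB mulr_sumr.
by apply: eq_bigr => i _; rewrite -mul_powR_div //; ring.
Qed.

Lemma Omega_fdiv s p q : Gamma n p -> Gamma n q ->
  Omega s p q = fdiv (phi_gen s) (mid p q) p.
Proof.
move=> [p_gt0 sum_p] [q_gt0 _]; rewrite /Omega /phi_gen /fdiv /mid.
have [_|s0] := eqVneq s 0.
  apply: eq_bigr => i _; rewrite /= -lnV ?posrE ?divr_gt0 ?addr_gt0 //.
  by congr (_ * ln _); field; rewrite !gt_eqF ?addr_gt0.
have [_|s1] := eqVneq s 1.
  apply: eq_bigr => i _; rewrite /= div_mul2.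
  by set L := ln _; field; rewrite gt_eqF.
rewrite -[X in _ * (_ - X)]sum_p -sumrB mulr_sumr.
by apply: eq_bigr => i _; rewrite div_mul2; ring.
Qed.

Lemma zeta_fdiv s p q : Gamma n p -> Gamma n q ->
  zeta s p q = fdiv (zeta_gen s) (mid p q) q.
Proof.
move=> [p_gt0 _] [q_gt0 _]; rewrite /zeta /zeta_gen /fdiv /mid.
have [_|s1] := eqVneq s 1.
  apply: eq_bigr => i _; rewrite /= div_mul2.
  by set L := ln _; field; rewrite gt_eqF.
rewrite mulr_sumr; apply: eq_bigr => i _; rewrite /= div_mul2.
rewrite [_ `^ s]powR_sub1 ?divr_gt0 ?addr_gt0 //.
by field; rewrite gt_eqF ?subr_eq0.
Qed.

Lemma Phi_nonneg_convex (s : R) : nonneg_on_Gamma n (Phi s) /\ jointly_convex n (Phi s).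
Proof.
apply: (fdiv_nonneg_convex (X := fun p q => p) (Y := fun p q => q)
          (phi_gen_support_lines s) ltr01 (phi_gen1 s)) => //; last exact: Phi_fdiv.
by move=> p q [p_gt0 sum_p] [q_gt0 sum_q]; split=> // [i|]; rewrite ?divr_gt0 ?sum_p ?sum_q.
Qed.

Lemma Omega_nonneg_convex (s : R) :
  nonneg_on_Gamma n (Omega s) /\ jointly_convex n (Omega s).
Proof.
apply: (fdiv_nonneg_convex (X := mid) (Y := fun p q => p)
          (phi_gen_support_lines s) ltr01 (phi_gen1 s)) => //.
- exact: mid_mix.
- move=> p q gp gq; have [p_gt0 sum_p] := gp; have [q_gt0 _] := gq.
  by split=> // [i|]; rewrite ?sum_mid ?divr_gt0 ?addr_gt0.
- exact: Omega_fdiv.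
Qed.

Lemma zeta_nonneg_convex (s : R) : 0 <= s <= 4 ->
  nonneg_on_Gamma n (zeta s) /\ jointly_convex n (zeta s).
Proof.
move=> s04; apply: (fdiv_nonneg_convex (X := mid) (Y := fun p q => q)
          (zeta_gen_support_lines s04) _ (zeta_gen1 s)) => //.
- lra.
- exact: mid_mix.
- move=> p q gp gq; have [q_gt0 sum_q] := gq.
  by split=> [i|i|]; rewrite ?sum_mid ?sum_q ?half_lt_mid_div.
- exact: zeta_fdiv.
Qed.

End Measures.

Theorem mainTheorem2 (R : realType) (n : nat) (hn : (2 <= n)%N) :
  (forall s : R,
     (nonneg_on_Gamma n (Phi s) /\ jointly_convex n (Phi s)) /\
     (nonneg_on_Gamma n (Omega s) /\ jointly_convex n (Omega s)) /\
     (nonneg_on_Gamma n (fun p q => Omega s q p) /\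
      jointly_convex n (fun p q => Omega s q p))) /\
  (forall s : R, 0 <= s <= 4 ->
     (nonneg_on_Gamma n (zeta s) /\ jointly_convex n (zeta s)) /\
     (nonneg_on_Gamma n (fun p q => zeta s q p) /\
      jointly_convex n (fun p q => zeta s q p))).
Proof.
split=> [s|s s04].
  have [Omega_ge0 Omega_cvx] := Omega_nonneg_convex n s.
  split; first exact: Phi_nonneg_convex.
  by split; last split; [|exact: nonneg_on_Gamma_swap|exact: jointly_convex_swap].
have [zeta_ge0 zeta_cvx] := zeta_nonneg_convex n s04.
by split; last split; [|exact: nonneg_on_Gamma_swap|exact: jointly_convex_swap].
Qed.
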